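(* Let $k\ge 2$ be an integer, and let $\hat m_k$ denote the nonzero mode value at the first double mode of the Poisson distribution of order $k$ (as defined in the context). Then $$k \le \hat m_k < \kappa, \qquad \text{where } \kappa = \frac{k(k+1)}{2}.$$
   Context: For an integer $k\ge1$ and a real $\lambda>0$, the Poisson distribution of order $k$ with parameter $\lambda$ is the distribution on $\{0,1,2,\dots\}$ with probability mass function $$f_k(n;\lambda)=e^{-k\lambda}\sum_{\substack{n_1,\dots,n_k\ge 0\\ n_1+2n_2+\dots+kn_k=n}}\frac{\lambda^{n_1+\dots+n_k}}{n_1!\cdots n_k!},\qquad n=0,1,2,\dots$$ A mode is any $n$ at which $f_k(n;\lambda)$ attains its global maximum over $n\ge0$. The distribution has a double mode at $m_1\neq m_2$ if $m_1$ and $m_2$ are exactly the two modes. The ''first double mode'' refers to the smallest value of $\lambda>0$, denoted $\hat\lambda_k$, at which the distribution has a double mode; at this value the two modes are $0$ and a positive integer, denoted $\hat m_k$. *)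

From HB Require Import structures.
From mathcomp Require Import all_boot all_order all_algebra.
From mathcomp Require Import all_classical all_reals all_analysis.
Set Implicit Arguments. Unset Strict Implicit. Unset Printing Implicit Defensive.
Import Order.TTheory GRing.Theory Num.Theory.
Local Open Scope ring_scope.

(* The tuples (n_1,...,n_k) with n_1 + 2 n_2 + ... + k n_k = n have every
   n_i <= n, so they are enumerated as v : {ffun 'I_k -> 'I_n.+1},
   with n_{i+1} = v i. *)
Definition poisk_pmf (R : realType) (k : nat) (lam : R) (n : nat) : R :=
  expR (- (k%:R * lam)) *
  \sum_(v : {ffun 'I_k -> 'I_n.+1} | (\sum_(i < k) i.+1 * v i)%N == n)
     lam ^+ (\sum_(i < k) (v i : nat))%N / (\prod_(i < k) (v i)`!)%:R.

Definition is_mode (R : realType) (k : nat) (lam : R) (n : nat) : Prop :=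
  forall n' : nat, poisk_pmf k lam n' <= poisk_pmf k lam n.

Definition double_mode (R : realType) (k : nat) (lam : R) (m1 m2 : nat) : Prop :=
  m1 <> m2 /\ is_mode k lam m1 /\ is_mode k lam m2 /\
  (forall n, is_mode k lam n -> n = m1 \/ n = m2).

Definition has_double_mode (R : realType) (k : nat) (lam : R) : Prop :=
  exists m1 m2, double_mode k lam m1 m2.

Definition first_double_mode (R : realType) (k : nat) (lam : R) : Prop :=
  0 < lam /\ has_double_mode k lam /\
  (forall mu : R, 0 < mu -> mu < lam -> ~ has_double_mode k mu).

(* Write f_k(n; lam) = e^(-k lam) w(n), where w(n) is the coefficient of z^n in
   prod_(i=1..k) exp(lam z^i).  Comparing coefficients in z Q'(z) = lam (sum_i i z^i) Q(z)
   gives w(0) = 1 and n w(n) = lam sum_(1 <= i <= min(k, n)) i w(n - i).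
   At a double mode {0, m} we have w <= 1 = w(m).  If m < k, the recurrence at m and
   m + 1 gives (m + 1) w(m + 1) = m + lam (1 + sum_(i < m) w(i)) together with
   m <= lam m sum_(i < m) w(i), which forces w(m + 1) > 1.  Moreover w(1) = lam < 1,
   as lam = 1 would make 1 a third mode, so m = lam sum_i i w(m - i) <= lam kappa < kappa. *)

From HB Require Import structures.
From mathcomp Require Import all_boot all_order all_algebra.
From mathcomp Require Import all_classical all_reals all_analysis.
From mathcomp Require Import ring zify.
Set Implicit Arguments. Unset Strict Implicit. Unset Printing Implicit Defensive.
Import Order.TTheory GRing.Theory Num.Theory.
Local Open Scope ring_scope.

Section TruncatedGeneratingFunction.

Variables (R : numFieldType) (lam : R).

Definition exp_coef (t : nat) : R := lam ^+ t / t`!%:R.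

Lemma exp_coefS t : exp_coef t.+1 *+ t.+1 = lam * exp_coef t.
Proof.
rewrite /exp_coef factS natrM exprS -mulr_natr.
have fact_neq0 : (t`!%:R : R) != 0 by rewrite pnatr_eq0 -lt0n fact_gt0.
by field; rewrite fact_neq0 addrC natr1 pnatr_eq0.
Qed.

(* Power series are replaced by truncations: trunc_expX N i is exp(lam X^(i+1))
   cut after N terms, and the coefficient of X^n in trunc_genf N k does not depend
   on N >= n (coef_trunc_genf_stable). *)
Definition trunc_expX (N i : nat) : {poly R} :=
  \sum_(t < N.+1) exp_coef t *: 'X^(i.+1 * t).

Definition trunc_genf (N k : nat) : {poly R} := \prod_(i < k) trunc_expX N i.

Definition ramp_poly (k : nat) : {poly R} := \sum_(i < k) i.+1%:R *: 'X^(i.+1).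

Lemma X_deriv_trunc_expX N i : exists T : {poly R},
  'X * (trunc_expX N i)^`() =
    (i.+1%:R * lam) *: ('X^(i.+1) * trunc_expX N i) + 'X^(N.+1) * T.
Proof.
pose f t := (exp_coef t *+ (i.+1 * t)) *: ('X^(i.+1 * t) : {poly R}).
have Xderiv : 'X * (trunc_expX N i)^`() = \sum_(t < N.+1) f t.
  rewrite /trunc_expX raddf_sum mulr_sumr; apply: eq_bigr => t _.
  rewrite /= derivZ derivXn -scalerAr /f -scalerMnl scalerMnr; congr (_ *: _).
  case: (i.+1 * t)%N => [|m]; first by rewrite !mulr0n mulr0.
  by rewrite mulrnAr -exprS.
have shift : \sum_(t < N.+2) f t = (i.+1%:R * lam) *: ('X^(i.+1) * trunc_expX N i).
  rewrite big_ord_recl /f muln0 mulr0n scale0r add0r.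
  rewrite /trunc_expX mulr_sumr scaler_sumr; apply: eq_bigr => t _ /=.
  rewrite -scalerAr scalerA -exprD -mulnS /bump /=; congr (_ *: _).
  by rewrite mulnC mulrnA exp_coefS -mulr_natl; ring.
exists (- ((exp_coef N.+1 *+ (i.+1 * N.+1)) *: 'X^(i * N.+1))).
by rewrite Xderiv -shift (big_ord_recr N.+1) /= /f mulrN -scalerAr -exprD -mulSn addrK.
Qed.

Lemma X_deriv_trunc_genf N k : exists S : {poly R},
  'X * (trunc_genf N k)^`() = lam *: (ramp_poly k * trunc_genf N k) + 'X^(N.+1) * S.
Proof.
elim: k => [|k [S IH]].
  exists 0; rewrite /trunc_genf /ramp_poly !big_ord0 derivC.
  by rewrite mulr0 mul0r scaler0 mulr0 addr0.
have [T HT] := X_deriv_trunc_expX N k.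
exists (S * trunc_expX N k + trunc_genf N k * T).
rewrite /trunc_genf /ramp_poly !big_ord_recr /= derivM mulrDr mulrA IH mulrCA HT.
rewrite -/(trunc_genf N k) -/(ramp_poly k) -!mul_polyC polyCM.
ring.
Qed.

Lemma coef0_trunc_genf N k : (trunc_genf N k)`_0 = 1.
Proof.
elim: k => [|k IH]; first by rewrite /trunc_genf big_ord0 coefC.
rewrite /trunc_genf big_ord_recr /= coef0M -/(trunc_genf N k) IH mul1r.
rewrite /trunc_expX coef_sum big_ord_recl /= coefZ coefXn muln0 eqxx.
rewrite /exp_coef expr0 fact0 divr1 mulr1 big1 ?addr0 // => t _.
by rewrite coefZ coefXn eq_sym muln_eq0 mulr0.
Qed.

Lemma coef_trunc_genf_rec N k n : (n <= N)%N ->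
  (trunc_genf N k)`_n *+ n =
    lam * \sum_(i < k | (i < n)%N) i.+1%:R * (trunc_genf N k)`_(n - i.+1).
Proof.
move=> le_nN; have [S HS] := X_deriv_trunc_genf N k.
have := congr1 (fun p : {poly R} => p`_n) HS.
rewrite coefXM coefD coefZ coefXnM ltnS le_nN addr0 /ramp_poly mulr_suml coef_sum.
have -> : \sum_(i < k) (i.+1%:R *: 'X^(i.+1) * trunc_genf N k)`_n =
    \sum_(i < k | (i < n)%N) i.+1%:R * (trunc_genf N k)`_(n - i.+1).
  rewrite [RHS]big_mkcond /=; apply: eq_bigr => i _.
  by rewrite -scalerAl coefZ coefXnM ltnNge if_neg; case: ifP; rewrite ?mulr0.
by case: n le_nN => [|n] _ /=; rewrite ?coef_deriv => <-; rewrite ?mulr0n.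
Qed.

Lemma coef_trunc_genf_stable k n N M : (n <= N)%N -> (n <= M)%N ->
  (trunc_genf N k)`_n = (trunc_genf M k)`_n.
Proof.
elim/ltn_ind: n N M => -[|n] IH N M le_nN le_nM; first by rewrite !coef0_trunc_genf.
apply/eqP; rewrite -(eqr_pMn2r (ltn0Sn n)) !coef_trunc_genf_rec //; apply/eqP.
congr (_ * _); apply: eq_bigr => i lt_in; congr (_ * _); apply: IH; lia.
Qed.

Definition poisk_weight (k n : nat) : R := (trunc_genf n k)`_n.

Lemma poisk_weight_rec k n : poisk_weight k n *+ n =
  lam * \sum_(i < k | (i < n)%N) i.+1%:R * poisk_weight k (n - i.+1).
Proof.
rewrite /poisk_weight coef_trunc_genf_rec //; congr (_ * _).
by apply: eq_bigr => i _; congr (_ * _); apply: coef_trunc_genf_stable; rewrite ?leq_subr.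
Qed.

Lemma poisk_weight0 k : poisk_weight k 0 = 1.
Proof. exact: coef0_trunc_genf. Qed.

Lemma poisk_weight1 k : (0 < k)%N -> poisk_weight k 1 = lam.
Proof.
have := poisk_weight_rec k 1; rewrite mulr1n => ->.
case: k => // k _; rewrite (big_pred1 ord0) => [|i]; last by rewrite ltnS leqn0.
by rewrite subnn poisk_weight0 !mulr1.
Qed.

Lemma poisk_weightE k n : poisk_weight k n =
  \sum_(v : {ffun 'I_k -> 'I_n.+1} | (\sum_(i < k) i.+1 * v i)%N == n)
     lam ^+ (\sum_(i < k) (v i : nat))%N / (\prod_(i < k) (v i)`!)%:R.
Proof.
rewrite /poisk_weight /trunc_genf /trunc_expX bigA_distr_bigA /= coef_sum.
rewrite [RHS]big_mkcond /=; apply: eq_bigr => v _.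
rewrite scaler_prod prodrXr coefZ coefXn eq_sym.
case: eqP => _; last by rewrite mulr0.
by rewrite mulr1 /exp_coef big_split /= prodrXr prodfV natr_prod.
Qed.

Lemma poisk_weight_ge0 k n : 0 <= lam -> 0 <= poisk_weight k n.
Proof.
move=> lam_ge0; rewrite poisk_weightE; apply: sumr_ge0 => v _.
by rewrite divr_ge0 ?exprn_ge0 ?ler0n.
Qed.

Lemma poisk_weight_rec_small k n : (n <= k)%N ->
  poisk_weight k n *+ n = lam * \sum_(i < n) (n - i)%:R * poisk_weight k i.
Proof.
move=> le_nk; rewrite poisk_weight_rec.
rewrite -(big_ord_widen _ (fun i => i.+1%:R * poisk_weight k (n - i.+1)) le_nk).
congr (_ * _); rewrite (reindex_inj rev_ord_inj) /=; apply: eq_bigr => i _.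
by rewrite subnSK // subKn // ltnW.
Qed.

End TruncatedGeneratingFunction.

Lemma sum_ord_succ k : (\sum_(i < k) i.+1)%N = (k * k.+1 %/ 2)%N.
Proof.
have := bin2_sum k.+1; rewrite big_mkord big_ord_recl /= add0n => ->.
by rewrite bin2 divn2 mulnC.
Qed.

Lemma sum_subn_mul_recr (R : pzRingType) (q : nat -> R) n :
  \sum_(i < n.+1) (n.+1 - i)%:R * q i =
    \sum_(i < n) (n - i)%:R * q i + \sum_(i < n.+1) q i.
Proof.
rewrite !big_ord_recr /= subSnn mul1r addrA -big_split /=; congr (_ + _).
by apply: eq_bigr => i _; rewrite subSn 1?ltnW // -natr1 mulrDl mul1r.
Qed.

Section ModeBounds.

Variables (R : realFieldType) (k : nat) (lam : R) (m : nat).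
Hypotheses (lam_gt0 : 0 < lam) (weight_le1 : forall n, poisk_weight lam k n <= 1).
Hypothesis weight_m : poisk_weight lam k m = 1.

Lemma order_le_mode : (0 < m)%N -> (k <= m)%N.
Proof.
move=> m_gt0; rewrite leqNgt; apply/negP => lt_mk.
have rec_m := poisk_weight_rec_small lam (ltnW lt_mk).
have rec_m1 := poisk_weight_rec_small lam lt_mk.
rewrite sum_subn_mul_recr big_ord_recr /= weight_m in rec_m1.
rewrite weight_m in rec_m.
set U := \sum_(i < m) poisk_weight lam k i in rec_m1.
have ramp_le : \sum_(i < m) (m - i)%:R * poisk_weight lam k i <= m%:R * U.
  rewrite /U mulr_sumr; apply: ler_sum => i _.
  by rewrite ler_wpM2r ?ler_nat ?leq_subr // poisk_weight_ge0 // ltW.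
have lamU_ge1 : 1 <= lam * U.
  have m_pos : (0 : R) < m%:R by rewrite ltr0n.
  rewrite -(ler_pM2l m_pos) mulr1 {1}rec_m mulrCA.
  by rewrite ler_pM2l.
have weight_m1_le : poisk_weight lam k m.+1 *+ m.+1 <= m.+1%:R.
  by rewrite -[leLHS]mulr_natr ler_piMl.
rewrite rec_m1 mulrDr -rec_m mulrDr mulr1 -natr1 lerD2l in weight_m1_le.
by have := ler_ltD lamU_ge1 lam_gt0; rewrite addr0 ltNge weight_m1_le.
Qed.

Lemma mode_lt_triangular : lam < 1 -> (0 < k)%N -> (m < k * k.+1 %/ 2)%N.
Proof.
move=> lam_lt1 k_gt0.
have m_le : (m%:R : R) <= lam * (k * k.+1 %/ 2)%:R.
  have := poisk_weight_rec lam k m; rewrite weight_m => ->.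
  rewrite -sum_ord_succ natr_sum; apply: ler_wpM2l; first exact: ltW.
  rewrite [leLHS]big_mkcond /=; apply: ler_sum => i _.
  by case: ifP => _; rewrite ?ler_piMr.
have kappa_pos : (0 : R) < (k * k.+1 %/ 2)%:R.
  by rewrite -sum_ord_succ ltr0n -(prednK k_gt0) big_ord_recl.
rewrite -(ltr_nat R); apply: le_lt_trans m_le _.
by rewrite -[ltRHS]mul1r ltr_pM2r.
Qed.

End ModeBounds.

Lemma poisk_pmfE (R : realType) k (lam : R) n :
  poisk_pmf k lam n = expR (- (k%:R * lam)) * poisk_weight lam k n.
Proof. by rewrite /poisk_pmf poisk_weightE. Qed.

Lemma is_modeE (R : realType) k (lam : R) n :
  is_mode k lam n <-> forall n', poisk_weight lam k n' <= poisk_weight lam k n.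
Proof.
by split=> mode_n n'; have := mode_n n'; rewrite !poisk_pmfE ler_pM2l ?expR_gt0.
Qed.

Theorem proposition1 (R : realType) (k : nat) (lamhat : R) (mhat : nat) :
  (2 <= k)%N ->
  first_double_mode k lamhat ->
  double_mode k lamhat 0%N mhat ->
  (0 < mhat)%N ->
  (k <= mhat)%N /\ (mhat < k * k.+1 %/ 2)%N.
Proof.
move=> k_ge2 [lam_gt0 _] [_ [/is_modeE mode0 [/is_modeE mode_m modes]]] m_gt0.
have weight_le1 n : poisk_weight lamhat k n <= 1.
  by rewrite -(poisk_weight0 lamhat k); exact: mode0.
have weight_m : poisk_weight lamhat k mhat = 1.
  by apply/le_anti; rewrite weight_le1 -{1}(poisk_weight0 lamhat k) mode_m.
have le_km := order_le_mode lam_gt0 weight_le1 weight_m m_gt0.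
split=> //; apply: (mode_lt_triangular lam_gt0 weight_le1 weight_m _ (ltnW k_ge2)).
rewrite lt_neqAle -(poisk_weight1 lamhat (ltnW k_ge2)) weight_le1 andbT.
apply/eqP => weight1; have /modes : is_mode k lamhat 1.
  by apply/is_modeE => n; rewrite weight1.
by case=> // m_eq1; move: le_km; rewrite -m_eq1; lia.
Qed.
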